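(* (i) For every $B\in\mathrm{M}_2(E_1)$, \[\{\mathrm{tr}(B)\mathrm{tr}(B^2)-\mathrm{tr}(B^3)\}I_2-\mathrm{tr}(B^2)B-\mathrm{tr}(B)B^2+2B^3=0.\] (ii) For every $B\in\mathrm{M}_3(E_1)$, \[\Big\{-\tfrac12\mathrm{tr}(B^2)^2\mathrm{tr}(B)+\mathrm{tr}(B^3)\mathrm{tr}(B^2)+\tfrac12\mathrm{tr}(B^4)\mathrm{tr}(B)-\mathrm{tr}(B^5)\Big\}I_3+\Big\{\tfrac12\mathrm{tr}(B^2)^2-\tfrac12\mathrm{tr}(B^4)\Big\}B\] \[+\{\mathrm{tr}(B^2)\mathrm{tr}(B)-\mathrm{tr}(B^3)\}B^2-2\mathrm{tr}(B^2)B^3-\mathrm{tr}(B)B^4+3B^5=0.\]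
   Context: $K$ is a field of characteristic zero. $E$ is the infinite-dimensional Grassmann (exterior) algebra over $K$, generated by countably many indeterminates $v_1,v_2,\dots$ subject to $v_iv_j+v_jv_i=0$ for all $i,j$. $E=E_0\oplus E_1$ is its natural $\mathbb{Z}_2$-grading: $E_0$ (resp. $E_1$) is the $K$-span of products of an even (resp. odd) number of generators. $\mathrm{M}_n(E_1)$ denotes the $n\times n$ matrices with entries in $E_1$, $I_n$ the identity matrix, $\mathrm{tr}$ the sum of diagonal entries; $\mathrm{tr}(B^2)^2$ means $(\mathrm{tr}(B^2))^2$. *)

(* A concrete model of the infinite-dimensional Grassmann
   algebra E over a field K:  an element is a formal K-linear combination of
   words in the generators v_0, v_1, ... (a word = seq nat), and two formal
   combinations denote the same element of E iff they have the same
   coordinates in the standard basis v_S (S strictly increasing) of E.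
   The coordinate of a word u on v_S is sign(u) if u has no repeated letter
   and is a permutation of S (sign = parity of the number of inversions),
   and 0 otherwise; this is exactly the normal form in
   K<v_1,v_2,...>/(v_i v_j + v_j v_i). *)
From HB Require Import structures.
From mathcomp Require Import all_boot all_order all_algebra.
Set Implicit Arguments. Unset Strict Implicit. Unset Printing Implicit Defensive.
Import Order.TTheory GRing.Theory Num.Theory.
Local Open Scope ring_scope.

Definition word := seq nat.

Definition Gr (K : fieldType) := seq (K * word).

Section Grassmann.
Variable K : fieldType.

Definition gzero : Gr K := [::].
Definition gone : Gr K := [:: (1, [::])].
Definition ggen (i : nat) : Gr K := [:: (1, [:: i])].
Definition gadd (x y : Gr K) : Gr K := x ++ y.
Definition gscale (a : K) (x : Gr K) : Gr K := [seq (a * p.1, p.2) | p <- x].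
Definition gopp (x : Gr K) : Gr K := gscale (-1) x.
Definition gmul (x y : Gr K) : Gr K :=
  [seq (p.1 * q.1, p.2 ++ q.2) | p <- x, q <- y].
Definition gsum (s : seq (Gr K)) : Gr K := foldr gadd gzero s.

Fixpoint ninv (u : word) : nat :=
  if u is a :: u' then (count (fun b => b < a)%N u' + ninv u')%N else 0%N.

Definition wcoef (u S : word) : K :=
  if uniq u && perm_eq u S then (-1) ^+ ninv u else 0.

Definition gcoef (x : Gr K) (S : word) : K :=
  \sum_(p <- x) p.1 * wcoef p.2 S.

Definition gzerop (x : Gr K) : Prop :=
  forall S : word, sorted ltn S -> gcoef x S = 0.

Definition godd (x : Gr K) : Prop :=
  forall S : word, sorted ltn S -> ~~ odd (size S) -> gcoef x S = 0.

Definition gmx (n : nat) := 'I_n -> 'I_n -> Gr K.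

Definition mxadd n (A B : gmx n) : gmx n := fun i j => gadd (A i j) (B i j).
Definition mxmul n (A B : gmx n) : gmx n :=
  fun i j => gsum [seq gmul (A i k) (B k j) | k <- enum 'I_n].
Definition mxlmul n (c : Gr K) (A : gmx n) : gmx n := fun i j => gmul c (A i j).
Definition mxscale n (a : K) (A : gmx n) : gmx n := fun i j => gscale a (A i j).
Definition mxscalar (n : nat) (c : Gr K) : gmx n := fun i j => if i == j then c else gzero.
Fixpoint mxpow n (B : gmx n) (k : nat) : gmx n :=
  match k with
  | 0 => @mxscalar n gone
  | k'.+1 => mxmul B (mxpow B k')
  end.
Definition mxtr n (A : gmx n) : Gr K := gsum [seq A i i | i <- enum 'I_n].

Definition mxzerop n (A : gmx n) : Prop := forall i j, gzerop (A i j).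
Definition mxodd n (A : gmx n) : Prop := forall i j, godd (A i j).

End Grassmann.
Arguments mxscalar {K} n c.

From HB Require Import structures.
From mathcomp Require Import all_boot all_order all_algebra.
From mathcomp Require Import ring zify.
Set Implicit Arguments. Unset Strict Implicit. Unset Printing Implicit Defensive.
Import Order.TTheory GRing.Theory Num.Theory.
Local Open Scope ring_scope.

(* Both identities are polynomial identities in the entries of B, and these
   entries are odd elements of E, hence pairwise anticommuting and of square
   zero (2 being invertible).  We prove them by reflection.
   - Counting inversions shows how the coordinate of a word on a basis
     monomial changes when a block of it is sorted or two blocks are swapped.
     Hence the coordinates of a product only depend on those of the factors
     (multiplication is well defined on E), and odd elements anticommute.
   - A formal combination X over a field F of words in abstract generators is
     evaluated in E by a ring morphism f : F -> K on the coefficients and an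
     assignment v of elements of E to the generators; evaluation commutes
     with all the operations used in the identities.
   - When every v k is odd, each word may be replaced by a signed increasing
     word (or dropped) without changing its value, and a combination of such
     normal words whose coefficients cancel word by word evaluates to 0.
   - For the generic matrix with entries the generators, over Q, the entries
     of both identities reduce to cancelling normal forms, which is checked by
     computation; evaluating by ratr : Q -> K (a ring morphism since K has
     characteristic 0) at the entries of B gives the theorem. *)

Definition cross (u v : word) : nat := (\sum_(a <- u) count (fun b => b < a) v)%N.

Lemma ninv_cat u v : ninv (u ++ v) = (ninv u + ninv v + cross u v)%N.
Proof.
elim: u => [|a u IH] /=; first by rewrite /cross big_nil addn0.
rewrite IH /cross big_cons count_cat; lia.
Qed.

Lemma cross_perml u u' v : perm_eq u u' -> cross u v = cross u' v.
Proof. by move=> h; apply: perm_big. Qed.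

Lemma cross_permr u v v' : perm_eq v v' -> cross u v = cross u v'.
Proof. by move=> /permP h; apply: eq_bigr => a _; apply: h. Qed.

Lemma count_ltn_gtn a v : a \notin v ->
  (count (fun b => b < a) v + count (fun b => a < b) v = size v)%N.
Proof.
elim: v => //= b v IH; rewrite in_cons negb_or => /andP[ne /IH H].
by case: (ltngtP b a) ne => // h _; lia.
Qed.

Lemma cross_consr a u v :
  cross v (a :: u) = (count (fun b => a < b) v + cross v u)%N.
Proof.
rewrite /cross; elim: v => [|b v IH]; first by rewrite !big_nil.
by rewrite !big_cons IH /=; lia.
Qed.

(* for disjoint duplicate-free words every pair of letters is inverted once *)
Lemma cross_sym u v : uniq (u ++ v) -> (cross u v + cross v u = size u * size v)%N.
Proof.
elim: u => [|a u IH] /=.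
  by move=> _; rewrite /cross big_nil add0n big1 // => b _.
move=> /andP[nav /IH IHuv].
rewrite mem_cat negb_or in nav; case/andP: nav => _ nav.
rewrite cross_consr /cross big_cons -/(cross u v) -/(cross v u) mulSn.
by rewrite addnACA (count_ltn_gtn nav) IHuv.
Qed.

Lemma ninv_sorted s : sorted leq s -> ninv s = 0%N.
Proof.
elim: s => //= a s IH hs.
rewrite IH ?(path_sorted hs) // addn0.
have /allP hall := order_path_min leq_trans hs.
rewrite (eq_in_count (a2 := pred0)) ?count_pred0 // => b /hall /=.
by rewrite ltnNge => ->.
Qed.

Section Coordinates.
Variable K : fieldType.
Local Notation wcoef := (@wcoef K).
Local Notation gcoef := (@gcoef K).

Lemma perm_sort_leq u : perm_eq u (sort leq u).
Proof. by rewrite perm_sym perm_sort. Qed.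

Lemma wcoef_catl u v S :
  wcoef (u ++ v) S = wcoef u (sort leq u) * wcoef (sort leq u ++ v) S.
Proof.
rewrite /wcoef perm_sort_leq andbT.
have pc : perm_eq (sort leq u ++ v) (u ++ v) by rewrite perm_cat2r perm_sort.
rewrite (perm_uniq pc) (permPl pc).
case Hu: (uniq u); last by rewrite cat_uniq Hu /= mul0r.
case: ifP => _; last by rewrite mulr0.
rewrite !ninv_cat (ninv_sorted (sort_sorted leq_total u)).
by rewrite (cross_perml _ (perm_sort_leq u)) -exprD; congr (_ ^+ _); lia.
Qed.

Lemma wcoef_catr u v S :
  wcoef (v ++ u) S = wcoef u (sort leq u) * wcoef (v ++ sort leq u) S.
Proof.
rewrite /wcoef perm_sort_leq andbT.
have pc : perm_eq (v ++ sort leq u) (v ++ u) by rewrite perm_cat2l perm_sort.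
rewrite (perm_uniq pc) (permPl pc).
case Hu: (uniq u); last by rewrite cat_uniq Hu !andbF mul0r.
case: ifP => _; last by rewrite mulr0.
rewrite !ninv_cat (ninv_sorted (sort_sorted leq_total u)).
by rewrite (cross_permr _ (perm_sort_leq u)) -exprD; congr (_ ^+ _); lia.
Qed.

Lemma wcoef_swap T U S :
  wcoef (T ++ U) S = (-1) ^+ (size T * size U) * wcoef (U ++ T) S.
Proof.
rewrite /wcoef uniq_catC (perm_catC T U).
case: ifP => h; last by rewrite mulr0.
have hc := cross_sym (proj1 (andP h)).
rewrite !ninv_cat -exprD.
have -> : (size T * size U + (ninv U + ninv T + cross U T) =
   (ninv T + ninv U + cross T U) + (cross U T).*2)%N by rewrite mulnC -hc; lia.
by rewrite -[RHS]signr_odd oddD odd_double addbF signr_odd.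
Qed.

Lemma gcoef_add x y S : gcoef (gadd x y) S = gcoef x S + gcoef y S.
Proof. by rewrite /gcoef big_cat. Qed.

Lemma gcoef0 S : gcoef (gzero K) S = 0.
Proof. by rewrite /gcoef big_nil. Qed.

Lemma gcoef_scale a x S : gcoef (gscale a x) S = a * gcoef x S.
Proof. by rewrite /gcoef big_map mulr_sumr; apply: eq_bigr => p _; rewrite mulrA. Qed.

Lemma gcoef_sum s S : gcoef (gsum s) S = \sum_(x <- s) gcoef x S.
Proof.
elim: s => [|x s IH]; first by rewrite big_nil gcoef0.
by rewrite big_cons /= gcoef_add IH.
Qed.

Lemma gcoef_mul x y S : gcoef (gmul x y) S =
  \sum_(p <- x) \sum_(q <- y) p.1 * q.1 * wcoef (p.2 ++ q.2) S.
Proof. by rewrite /gcoef /gmul big_allpairs_dep. Qed.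

(* Multiplication is well defined on E: expanding both factors in the
   standard basis. *)

Definition covers (x : Gr K) (L : seq word) :=
  [/\ uniq L, all (sorted ltn) L & forall p, p \in x -> uniq p.2 -> sort leq p.2 \in L].

Lemma sum_cover x (G : word -> K) L : covers x L ->
  \sum_(p <- x) p.1 * wcoef p.2 (sort leq p.2) * G (sort leq p.2) =
  \sum_(T <- L) gcoef x T * G T.
Proof.
case=> uL /allP sL hL.
under [RHS]eq_bigr => T _ do rewrite /gcoef mulr_suml.
rewrite exchange_big /=; apply: eq_big_seq => p px.
under eq_bigr => T _ do rewrite -mulrA.
rewrite -mulr_sumr -mulrA; congr (_ * _).
case Hu: (uniq p.2); last first.
  by rewrite /wcoef Hu /= mul0r big1 // => T _; rewrite mul0r.
rewrite (bigD1_seq (sort leq p.2)) ?hL //= big_seq_cond big1 ?addr0 //.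
move=> T /andP[TL ne]; rewrite /wcoef Hu /=; case: ifP => [pT|]; last by rewrite mul0r.
have sT : sorted leq T by move: (sL T TL); rewrite ltn_sorted_uniq_leq => /andP[].
have := perm_sortP leq_total leq_trans anti_leq _ _ pT.
by rewrite (sorted_sort leq_trans sT) => e; rewrite e eqxx in ne.
Qed.

Lemma gcoef_mul_basis x y L L' S : covers x L -> covers y L' ->
  gcoef (gmul x y) S =
  \sum_(T <- L) \sum_(U <- L') gcoef x T * gcoef y U * wcoef (T ++ U) S.
Proof.
move=> cx cy; rewrite gcoef_mul.
transitivity (\sum_(p <- x) p.1 * wcoef p.2 (sort leq p.2) *
   (fun T => \sum_(q <- y) q.1 * wcoef (T ++ q.2) S) (sort leq p.2)).
  apply: eq_bigr => p _ /=; rewrite mulr_sumr; apply: eq_bigr => q _.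
  by rewrite wcoef_catl; ring.
rewrite (sum_cover (fun T => \sum_(q <- y) q.1 * wcoef (T ++ q.2) S) cx).
apply: eq_bigr => T _ /=.
transitivity (gcoef x T * \sum_(q <- y) q.1 * wcoef q.2 (sort leq q.2) *
   (fun U => wcoef (T ++ U) S) (sort leq q.2)).
  by congr (_ * _); apply: eq_bigr => q _; rewrite wcoef_catr mulrA.
rewrite (sum_cover (fun U => wcoef (T ++ U) S) cy) mulr_sumr.
by apply: eq_bigr => U _; rewrite mulrA.
Qed.

Definition cover (x : Gr K) : seq word := undup [seq sort leq p.2 | p <- x & uniq p.2].

Lemma cover_sub x z : {subset x <= z} -> covers x (cover z).
Proof.
move=> xz; split; first exact: undup_uniq.
  apply/allP => T; rewrite mem_undup => /mapP[p].
  rewrite mem_filter => /andP[up _] ->.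
  by rewrite ltn_sorted_uniq_leq sort_uniq up sort_sorted //; exact: leq_total.
by move=> p px up; rewrite mem_undup; apply: map_f; rewrite mem_filter up xz.
Qed.

Lemma cover_self x : covers x (cover x).
Proof. exact: cover_sub. Qed.

Definition gequiv (x y : Gr K) := forall S, gcoef x S = gcoef y S.

Lemma gequiv_mull x x' y : gequiv x x' -> gequiv (gmul x y) (gmul x' y).
Proof.
move=> h S.
have c1 : covers x (cover (x ++ x')) by apply: cover_sub => p hp; rewrite mem_cat hp.
have c2 : covers x' (cover (x ++ x')) by apply: cover_sub => p hp; rewrite mem_cat hp orbT.
rewrite (gcoef_mul_basis _ c1 (cover_self y)) (gcoef_mul_basis _ c2 (cover_self y)).
by apply: eq_bigr => T _; rewrite h.
Qed.

Lemma gequiv_mulr x y y' : gequiv y y' -> gequiv (gmul x y) (gmul x y').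
Proof.
move=> h S.
have c1 : covers y (cover (y ++ y')) by apply: cover_sub => p hp; rewrite mem_cat hp.
have c2 : covers y' (cover (y ++ y')) by apply: cover_sub => p hp; rewrite mem_cat hp orbT.
rewrite (gcoef_mul_basis _ (cover_self x) c1) (gcoef_mul_basis _ (cover_self x) c2).
by apply: eq_bigr => T _; apply: eq_bigr => U _; rewrite h.
Qed.

(* odd elements anticommute: swapping two odd monomials gives a sign -1 *)
Lemma gmul_anti x y : godd x -> godd y -> gequiv (gmul x y) (gscale (-1) (gmul y x)).
Proof.
move=> ox oy S; rewrite gcoef_scale.
rewrite (gcoef_mul_basis _ (cover_self x) (cover_self y)).
rewrite (gcoef_mul_basis _ (cover_self y) (cover_self x)).
rewrite [in RHS]exchange_big mulr_sumr; apply: eq_big_seq => T hT.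
rewrite mulr_sumr; apply: eq_big_seq => U hU.
have [_ /allP sx _] := cover_self x.
have [_ /allP sy _] := cover_self y.
case: (boolP (odd (size T))) => oT; last by rewrite ox ?sx // !(mul0r, mulr0).
case: (boolP (odd (size U))) => oU; last by rewrite oy ?sy // !(mul0r, mulr0).
rewrite wcoef_swap -signr_odd oddM oT oU /= expr1; ring.
Qed.

Lemma gmulA x y z S : gcoef (gmul (gmul x y) z) S = gcoef (gmul x (gmul y z)) S.
Proof.
rewrite !gcoef_mul big_allpairs_dep; apply: eq_bigr => p _.
rewrite big_allpairs_dep; apply: eq_bigr => q _; apply: eq_bigr => r _ /=.
by rewrite catA mulrA.
Qed.

Lemma gmulDl x y z S : gcoef (gmul (gadd x y) z) S = gcoef (gmul x z) S + gcoef (gmul y z) S.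
Proof. by rewrite !gcoef_mul big_cat. Qed.

Lemma gmulDr x y z S : gcoef (gmul x (gadd y z)) S = gcoef (gmul x y) S + gcoef (gmul x z) S.
Proof. by rewrite !gcoef_mul -big_split; apply: eq_bigr => p _; rewrite big_cat. Qed.

Lemma gmulZl a x y S : gcoef (gmul (gscale a x) y) S = a * gcoef (gmul x y) S.
Proof.
rewrite !gcoef_mul big_map mulr_sumr; apply: eq_bigr => p _.
by rewrite mulr_sumr; apply: eq_bigr => q _ /=; ring.
Qed.

Lemma gmulZr a x y S : gcoef (gmul x (gscale a y)) S = a * gcoef (gmul x y) S.
Proof.
rewrite !gcoef_mul mulr_sumr; apply: eq_bigr => p _.
by rewrite big_map mulr_sumr; apply: eq_bigr => q _ /=; ring.
Qed.

Lemma gmul0l y S : gcoef (gmul (gzero K) y) S = 0.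
Proof. by rewrite gcoef_mul big_nil. Qed.

Lemma gmul0r x S : gcoef (gmul x (gzero K)) S = 0.
Proof. by rewrite gcoef_mul big1 // => p _; rewrite big_nil. Qed.

Lemma gmul1l x S : gcoef (gmul (gone K) x) S = gcoef x S.
Proof.
by rewrite gcoef_mul big_cons big_nil addr0 /=; apply: eq_bigr => q _; rewrite mul1r.
Qed.

Lemma gmul1r x S : gcoef (gmul x (gone K)) S = gcoef x S.
Proof.
rewrite gcoef_mul; apply: eq_bigr => p _.
by rewrite big_cons big_nil addr0 /= mulr1 cats0.
Qed.

Lemma gmul_sumr x s S : gcoef (gmul x (gsum s)) S = \sum_(y <- s) gcoef (gmul x y) S.
Proof.
elim: s => [|y s IH]; first by rewrite big_nil gmul0r.
by rewrite big_cons /= gmulDr IH.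
Qed.

Lemma gmul_suml s y S : gcoef (gmul (gsum s) y) S = \sum_(x <- s) gcoef (gmul x y) S.
Proof.
elim: s => [|x s IH]; first by rewrite big_nil gmul0l.
by rewrite big_cons /= gmulDl IH.
Qed.

Lemma gmul_odd_sq x : (2%:R : K) != 0 -> godd x -> gequiv (gmul x x) (gzero K).
Proof.
move=> h2 ox S; have := gmul_anti ox ox S.
rewrite gcoef_scale mulN1r gcoef0 => /eqP.
rewrite -subr_eq0 opprK -mulr2n -mulr_natr mulf_eq0 (negPf h2) orbF.
by move/eqP.
Qed.

End Coordinates.

(* The two identities, over an arbitrary field F and for matrix operations
   computed along an arbitrary enumeration r of the indices; with
   r = enum 'I_n these are the operations of the statement. *)

Section Identities.
Variable F : fieldType.

Definition mxmul_on n (r : seq 'I_n) (A B : gmx F n) : gmx F n :=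
  fun i j => gsum [seq gmul (A i k) (B k j) | k <- r].

Fixpoint mxpow_on n (r : seq 'I_n) (B : gmx F n) (k : nat) : gmx F n :=
  if k is k'.+1 then mxmul_on r B (mxpow_on r B k') else mxscalar n (gone F).

Definition mxtr_on n (r : seq 'I_n) (A : gmx F n) : Gr F := gsum [seq A i i | i <- r].

Definition ident2 (r : seq 'I_2) (B : gmx F 2) : gmx F 2 :=
  let t1 := mxtr_on r B in
  let t2 := mxtr_on r (mxpow_on r B 2) in
  let t3 := mxtr_on r (mxpow_on r B 3) in
  mxadd (mxscalar 2 (gadd (gmul t1 t2) (gopp t3)))
  (mxadd (mxlmul (gopp t2) B)
  (mxadd (mxlmul (gopp t1) (mxpow_on r B 2))
         (mxscale 2%:R (mxpow_on r B 3)))).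

Definition ident3 (r : seq 'I_3) (B : gmx F 3) : gmx F 3 :=
  let t1 := mxtr_on r B in
  let t2 := mxtr_on r (mxpow_on r B 2) in
  let t3 := mxtr_on r (mxpow_on r B 3) in
  let t4 := mxtr_on r (mxpow_on r B 4) in
  let t5 := mxtr_on r (mxpow_on r B 5) in
  mxadd (mxscalar 3
           (gadd (gscale (- (2%:R)^-1) (gmul (gmul t2 t2) t1))
           (gadd (gmul t3 t2)
           (gadd (gscale ((2%:R)^-1) (gmul t4 t1))
                 (gopp t5)))))
  (mxadd (mxlmul (gadd (gscale ((2%:R)^-1) (gmul t2 t2))
                       (gscale (- (2%:R)^-1) t4)) B)
  (mxadd (mxlmul (gadd (gmul t2 t1) (gopp t3)) (mxpow_on r B 2))
  (mxadd (mxlmul (gscale (- 2%:R) t2) (mxpow_on r B 3))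
  (mxadd (mxlmul (gopp t1) (mxpow_on r B 4))
         (mxscale 3%:R (mxpow_on r B 5)))))).

Definition generic_mx n : gmx F n := fun i j => ggen F (i * n + j)%N.

End Identities.
Arguments generic_mx : clear implicits.

(* Normal forms of words in anticommuting generators of square zero.
   ins a s inserts the letter a into the increasing word s, returning the
   parity of the number of transpositions performed, or None when a occurs
   in s (the product then vanishes); nfw sorts a whole word in this way. *)

Fixpoint ins (a : nat) (s : word) : option (bool * word) :=
  match s with
  | [::] => Some (false, [:: a])
  | b :: s' => if (a < b)%N then Some (false, a :: s)
               else if a == b then None
               else if ins a s' is Some (e, t) then Some (~~ e, b :: t) else None
  end.

Fixpoint nfw (w : word) : option (bool * word) :=
  if w is a :: w' then
    if nfw w' is Some (e, t) then
      if ins a t is Some (e', t') then Some (e (+) e', t') else None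
    else None
  else Some (false, [::]).

Fixpoint nfX (F : fieldType) (X : Gr F) : Gr F :=
  if X is p :: X' then
    if nfw p.2 is Some (e, t) then ((-1) ^+ e * p.1, t) :: nfX X' else nfX X'
  else [::].

Fixpoint csum (F : fieldType) (t : word) (X : Gr F) : F :=
  if X is p :: X' then (if p.2 == t then p.1 else 0) + csum t X' else 0.

Definition zcheck (F : fieldType) (X : Gr F) : bool :=
  all (fun t => csum t X == 0) (map snd X).

Section Evaluation.
Variables (F K : fieldType) (f : F -> K).
Hypothesis fD : forall a b, f (a + b) = f a + f b.
Hypothesis fM : forall a b, f (a * b) = f a * f b.
Hypothesis f1 : f 1 = 1.

Lemma f0 : f 0 = 0.
Proof. by apply: (addrI (f 0)); rewrite -fD !addr0. Qed.

Lemma fN a : f (- a) = - f a.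
Proof. by apply/eqP; rewrite -subr_eq0 opprK -fD addNr f0. Qed.

Lemma fV a : f a^-1 = (f a)^-1.
Proof.
have [->|a0] := eqVneq a 0; first by rewrite invr0 f0 invr0.
have inv_a : f a * f a^-1 = 1 by rewrite -fM mulfV // f1.
have fa0 : f a != 0 by apply: contra_eq_neq inv_a => ->; rewrite mul0r eq_sym oner_eq0.
by rewrite -[RHS]mulr1 -inv_a mulKf.
Qed.

Lemma fnat m : f m%:R = m%:R.
Proof. by elim: m => [|m IH]; rewrite ?f0 // -addn1 !natrD fD IH f1. Qed.

Variable v : nat -> Gr K.

Definition gprod (w : word) : Gr K := foldr (fun a acc => gmul (v a) acc) (gone K) w.
Definition geval (x : Gr F) : Gr K := gsum [seq gscale (f p.1) (gprod p.2) | p <- x].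

Lemma gcoef_geval x S : gcoef (geval x) S = \sum_(p <- x) f p.1 * gcoef (gprod p.2) S.
Proof. by rewrite /geval gcoef_sum big_map; apply: eq_bigr => p _; rewrite gcoef_scale. Qed.

Lemma gprod_cat w1 w2 : gequiv (gprod (w1 ++ w2)) (gmul (gprod w1) (gprod w2)).
Proof.
elim: w1 => [|a w1 IH] S /=; first by rewrite gmul1l.
by rewrite (gequiv_mulr _ IH) gmulA.
Qed.

Lemma geval_add x y : gequiv (geval (gadd x y)) (gadd (geval x) (geval y)).
Proof. by move=> S; rewrite gcoef_add !gcoef_geval big_cat. Qed.

Lemma geval_scale a x : gequiv (geval (gscale a x)) (gscale (f a) (geval x)).
Proof.
move=> S; rewrite gcoef_scale !gcoef_geval big_map mulr_sumr.
by apply: eq_bigr => p _ /=; rewrite fM mulrA.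
Qed.

Lemma geval_mul x y : gequiv (geval (gmul x y)) (gmul (geval x) (geval y)).
Proof.
move=> S; rewrite gcoef_geval big_allpairs_dep /geval gmul_suml big_map.
apply: eq_bigr => p _; rewrite gmul_sumr big_map; apply: eq_bigr => q _ /=.
by rewrite gmulZl gmulZr fM gprod_cat; ring.
Qed.

Lemma geval_sum s : gequiv (geval (gsum s)) (gsum [seq geval x | x <- s]).
Proof.
elim: s => [|x s IH] S; first by rewrite gcoef_geval big_nil.
by rewrite /= geval_add !gcoef_add IH.
Qed.

Lemma cg_add x y x' y' : gequiv (geval x) x' -> gequiv (geval y) y' ->
  gequiv (geval (gadd x y)) (gadd x' y').
Proof. by move=> h1 h2 S; rewrite geval_add !gcoef_add h1 h2. Qed.

Lemma cg_mul x y x' y' : gequiv (geval x) x' -> gequiv (geval y) y' ->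
  gequiv (geval (gmul x y)) (gmul x' y').
Proof. by move=> h1 h2 S; rewrite geval_mul (gequiv_mull _ h1) (gequiv_mulr _ h2). Qed.

Lemma cg_scale a a' x x' : f a = a' -> gequiv (geval x) x' ->
  gequiv (geval (gscale a x)) (gscale a' x').
Proof. by move=> e h S; rewrite geval_scale !gcoef_scale h e. Qed.

Lemma cg_opp x x' : gequiv (geval x) x' -> gequiv (geval (gopp x)) (gopp x').
Proof. by apply: cg_scale; rewrite fN f1. Qed.

Lemma cg_sum (I : Type) (l : seq I) (X : I -> Gr F) (X' : I -> Gr K) :
  (forall k, gequiv (geval (X k)) (X' k)) ->
  gequiv (geval (gsum [seq X k | k <- l])) (gsum [seq X' k | k <- l]).
Proof.
move=> h S; rewrite geval_sum !gcoef_sum -map_comp !big_map.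
by apply: eq_bigr => k _; apply: h.
Qed.

Lemma cg_one : gequiv (geval (gone F)) (gone K).
Proof. by move=> S; rewrite gcoef_geval big_cons big_nil addr0 /= f1 mul1r. Qed.

Definition mxeval n (A : gmx F n) : gmx K n := fun i j => geval (A i j).
Definition mxequiv n (A B : gmx K n) := forall i j, gequiv (A i j) (B i j).

Lemma mcg_add n (A B : gmx F n) A' B' : mxequiv (mxeval A) A' -> mxequiv (mxeval B) B' ->
  mxequiv (mxeval (mxadd A B)) (mxadd A' B').
Proof. by move=> h1 h2 i j; apply: cg_add; [apply: h1 | apply: h2]. Qed.

Lemma mcg_mul n (r : seq 'I_n) (A B : gmx F n) A' B' :
  mxequiv (mxeval A) A' -> mxequiv (mxeval B) B' ->
  mxequiv (mxeval (mxmul_on r A B)) (mxmul_on r A' B').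
Proof. by move=> h1 h2 i j; apply: cg_sum => k; apply: cg_mul; [apply: h1 | apply: h2]. Qed.

Lemma mcg_lmul n c c' (A : gmx F n) A' : gequiv (geval c) c' -> mxequiv (mxeval A) A' ->
  mxequiv (mxeval (mxlmul c A)) (mxlmul c' A').
Proof. by move=> h1 h2 i j; apply: cg_mul; last apply: h2. Qed.

Lemma mcg_scale n a a' (A : gmx F n) A' : f a = a' -> mxequiv (mxeval A) A' ->
  mxequiv (mxeval (mxscale a A)) (mxscale a' A').
Proof. by move=> h1 h2 i j; apply: cg_scale; last apply: h2. Qed.

Lemma mcg_scalar n c c' : gequiv (geval c) c' -> mxequiv (mxeval (mxscalar n c)) (mxscalar n c').
Proof. by move=> h i j S; rewrite /mxeval /mxscalar; case: (i == j). Qed.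

Lemma cg_tr n (r : seq 'I_n) (A : gmx F n) A' :
  mxequiv (mxeval A) A' -> gequiv (geval (mxtr_on r A)) (mxtr_on r A').
Proof. by move=> h; apply: cg_sum => i; apply: h. Qed.

Lemma mcg_generic n (B : gmx K n) : (forall i j : 'I_n, v (i * n + j)%N = B i j) ->
  mxequiv (mxeval (generic_mx F n)) B.
Proof.
move=> hv i j S; rewrite gcoef_geval big_cons big_nil addr0 /= f1 mul1r.
by rewrite gmul1r hv.
Qed.

Ltac eval_congr hv :=
  repeat first
    [ apply: mcg_add | apply: mcg_mul | apply: mcg_lmul | apply: mcg_scale
    | apply: mcg_scalar | exact: (mcg_generic hv)
    | apply: cg_add | apply: cg_mul | apply: cg_opp | apply: cg_scale
    | apply: cg_tr | exact: cg_one
    | by rewrite ?fN ?fV ?fnat ].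

Lemma eval_ident2 (r : seq 'I_2) (B : gmx K 2) :
  (forall i j : 'I_2, v (i * 2 + j)%N = B i j) ->
  mxequiv (mxeval (ident2 r (generic_mx F 2))) (ident2 r B).
Proof. by move=> hv; rewrite /ident2; eval_congr hv. Qed.

Lemma eval_ident3 (r : seq 'I_3) (B : gmx K 3) :
  (forall i j : 'I_3, v (i * 3 + j)%N = B i j) ->
  mxequiv (mxeval (ident3 r (generic_mx F 3))) (ident3 r B).
Proof. by move=> hv; rewrite /ident3; eval_congr hv. Qed.

Lemma zcheck_geval X : zcheck X -> gequiv (geval X) (gzero K).
Proof.
move=> /allP hz S; rewrite gcoef0 gcoef_geval.
have csumE t Y : f (csum t Y) = \sum_(p <- Y | p.2 == t) f p.1.
  elim: Y => [|p Y IH] /=; first by rewrite big_nil f0.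
  by rewrite big_cons fD IH; case: (p.2 == t); rewrite ?f0 ?add0r.
pose U := undup (map snd X).
transitivity (\sum_(p <- X) \sum_(t <- U)
                (if p.2 == t then f p.1 * gcoef (gprod t) S else 0)).
  apply: eq_big_seq => p pX.
  rewrite (bigD1_seq p.2) ?undup_uniq ?mem_undup ?map_f //= eqxx big1 ?addr0 //.
  by move=> t /negPf; rewrite eq_sym => ->.
rewrite exchange_big big_seq big1 // => t; rewrite mem_undup => tX.
by rewrite -big_mkcond /= -mulr_suml -csumE (eqP (hz t tX)) f0 mul0r.
Qed.

Section OddGenerators.
Hypothesis v_odd : forall k, godd (v k).
Hypothesis two_neq0 : (2%:R : K) != 0.

Definition nfval (o : option (bool * word)) : Gr K :=
  if o is Some (e, t) then gscale ((-1) ^+ e) (gprod t) else gzero K.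

Lemma ins_val a s : gequiv (gmul (v a) (gprod s)) (nfval (ins a s)).
Proof.
elim: s => [|b s IH] S /=; first by rewrite gcoef_scale mul1r.
case: ifP => [_|_]; first by rewrite /= gcoef_scale mul1r.
case: eqP => [->|_].
  by rewrite gcoef0 -gmulA (gequiv_mull _ (gmul_odd_sq two_neq0 (v_odd b))) gmul0l.
rewrite -gmulA (gequiv_mull _ (gmul_anti (v_odd a) (v_odd b))) gmulZl gmulA.
rewrite (gequiv_mulr _ IH); case: (ins a s) => [[e t]|] /=; last by rewrite gmul0r gcoef0 mulr0.
by rewrite gmulZr gcoef_scale; case: e => /=; ring.
Qed.

Lemma nfw_val w : gequiv (gprod w) (nfval (nfw w)).
Proof.
elim: w => [|a w IH] S; first by rewrite /= expr0 mul1r.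
rewrite /= (gequiv_mulr _ IH); case: (nfw w) => [[e t]|] /=; last by rewrite gmul0r gcoef0.
rewrite gmulZr ins_val; case: (ins a t) => [[e' t']|] /=; last by rewrite gcoef0 mulr0.
by rewrite !gcoef_scale signr_addb mulrA.
Qed.

Lemma geval_nfX X : gequiv (geval X) (geval (nfX X)).
Proof.
elim: X => [|p X IH] S //=.
rewrite [in LHS]gcoef_geval big_cons -gcoef_geval IH nfw_val.
case: (nfw p.2) => [[e t]|]; last by rewrite gcoef0 mulr0 add0r.
rewrite [in RHS]gcoef_geval big_cons -gcoef_geval /= fM gcoef_scale mulrA (mulrC (f p.1)).
by case: e => /=; rewrite ?fN f1.
Qed.

Lemma mxzerop_by_normal_form n (M : gmx F n) (A : gmx K n) :
  mxequiv (mxeval M) A -> (forall i j, zcheck (nfX (M i j))) -> mxzerop A.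
Proof.
move=> hMA hz i j S _.
by rewrite -(hMA i j S) /mxeval geval_nfX (zcheck_geval (hz i j)) gcoef0.
Qed.

End OddGenerators.

End Evaluation.

Section RatEmbedding.
Variable K : fieldType.
Hypothesis charK0 : [pchar K] =i pred0.

Lemma intr_eq0_pchar0 (z : int) : (z%:~R == 0 :> K) = (z == 0).
Proof.
have natr_eq0 := iffLR (pcharf0P K) charK0.
by case: z => m; rewrite ?NegzE ?mulrNz ?oppr_eq0 natr_eq0.
Qed.

Lemma ratr_frac (m d : int) : d != 0 -> ratr (m%:~R / d%:~R) = m%:~R / d%:~R :> K.
Proof.
move=> d0; set x := _ / _.
have dQ : d%:~R != 0 :> rat by rewrite intr_eq0.
have dK : d%:~R != 0 :> K by rewrite intr_eq0_pchar0.
have denK : (denq x)%:~R != 0 :> K by rewrite intr_eq0_pchar0 denq_eq0.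
have numE : numq x * d = m * denq x.
  by apply: (@intr_inj rat); rewrite !rmorphM /= numqE /x; field.
by apply/eqP; rewrite /ratr eqr_div // -!rmorphM /= numE.
Qed.

Lemma ratrD (x y : rat) : ratr (x + y) = ratr x + ratr y :> K.
Proof.
have dQ z : (denq z)%:~R != 0 :> rat by rewrite intr_eq0 denq_eq0.
have dK z : (denq z)%:~R != 0 :> K by rewrite intr_eq0_pchar0 denq_eq0.
have -> : x + y = (numq x * denq y + numq y * denq x)%:~R / (denq x * denq y)%:~R.
  rewrite -[x in LHS]divq_num_den -[y in LHS]divq_num_den rmorphD !rmorphM /=.
  by field; rewrite !dQ.
rewrite ratr_frac ?mulf_neq0 ?denq_eq0 // /ratr rmorphD !rmorphM /=.
by field; rewrite dK dK.
Qed.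

Lemma ratrM (x y : rat) : ratr (x * y) = ratr x * ratr y :> K.
Proof.
have dQ z : (denq z)%:~R != 0 :> rat by rewrite intr_eq0 denq_eq0.
have -> : x * y = (numq x * numq y)%:~R / (denq x * denq y)%:~R.
  rewrite -[x in LHS]divq_num_den -[y in LHS]divq_num_den !rmorphM /=.
  by field; rewrite !dQ.
rewrite ratr_frac ?mulf_neq0 ?denq_eq0 // /ratr !rmorphM /=.
by rewrite mulf_div.
Qed.

Lemma ratr1 : ratr 1 = 1 :> K.
Proof. by rewrite /ratr divr1. Qed.

End RatEmbedding.

(* Since enum 'I_n does not reduce
   by computation, the operations are run along the explicit list ordl n. *)

Fixpoint ordl n : seq 'I_n :=
  if n is n'.+1 then ord0 :: map (lift ord0) (ordl n') else [::].

Lemma enum_ordl n : enum 'I_n = ordl n.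
Proof. by elim: n => [|n IH] /=; rewrite ?enum_ord0 // enum_ordSl IH. Qed.

Lemma forall_ordl n (P : 'I_n -> 'I_n -> bool) :
  all (fun i => all (P i) (ordl n)) (ordl n) -> forall i j, P i j.
Proof.
rewrite -enum_ordl => /allP hP i j.
by have /allP := hP i (mem_enum _ i); apply; rewrite mem_enum.
Qed.

Lemma ident2_normal_form i j : zcheck (nfX (ident2 (ordl 2) (generic_mx rat 2) i j)).
Proof. by move: i j; apply: forall_ordl; vm_compute. Qed.

Lemma ident3_normal_form i j : zcheck (nfX (ident3 (ordl 3) (generic_mx rat 3) i j)).
Proof. by move: i j; apply: forall_ordl; vm_compute. Qed.

Definition mx_entries (K : fieldType) n (B : gmx K n.+1) (k : nat) : Gr K :=
  B (inord (k %/ n.+1)) (inord (k %% n.+1)).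

Lemma mx_entriesE (K : fieldType) n (B : gmx K n.+1) (i j : 'I_n.+1) :
  mx_entries B (i * n.+1 + j) = B i j.
Proof.
rewrite /mx_entries divnMDl // divn_small // addn0 modnMDl modn_small //.
by rewrite !inord_val.
Qed.

Lemma mx_entries_odd (K : fieldType) n (B : gmx K n.+1) :
  mxodd B -> forall k, godd (mx_entries B k).
Proof. by move=> oddB k; apply: oddB. Qed.

Theorem corollary2p7 (K : fieldType) (charK0 : [pchar K] =i pred0) :
  (forall B : gmx K 2, mxodd B ->
     let t1 := mxtr B in
     let t2 := mxtr (mxpow B 2) in
     let t3 := mxtr (mxpow B 3) in
     mxzerop
       (mxadd (mxscalar 2 (gadd (gmul t1 t2) (gopp t3)))
       (mxadd (mxlmul (gopp t2) B)
       (mxadd (mxlmul (gopp t1) (mxpow B 2))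
              (mxscale 2%:R (mxpow B 3)))))) /\
  (forall B : gmx K 3, mxodd B ->
     let t1 := mxtr B in
     let t2 := mxtr (mxpow B 2) in
     let t3 := mxtr (mxpow B 3) in
     let t4 := mxtr (mxpow B 4) in
     let t5 := mxtr (mxpow B 5) in
     mxzerop
       (mxadd (mxscalar 3
                (gadd (gscale (- (2%:R)^-1) (gmul (gmul t2 t2) t1))
                (gadd (gmul t3 t2)
                (gadd (gscale ((2%:R)^-1) (gmul t4 t1))
                      (gopp t5)))))
       (mxadd (mxlmul (gadd (gscale ((2%:R)^-1) (gmul t2 t2))
                            (gscale (- (2%:R)^-1) t4)) B)
       (mxadd (mxlmul (gadd (gmul t2 t1) (gopp t3)) (mxpow B 2))
       (mxadd (mxlmul (gscale (- 2%:R) t2) (mxpow B 3))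
       (mxadd (mxlmul (gopp t1) (mxpow B 4))
              (mxscale 3%:R (mxpow B 5)))))))).
Proof.
have two_neq0 : (2%:R : K) != 0 by rewrite (iffLR (pcharf0P K) charK0).
have fD := ratrD charK0; have fM := ratrM charK0; have f1 := ratr1 K.
(* with r = enum 'I_n, ident2 and ident3 are the expressions of the
   statement; evaluate the generic identities at the entries of B *)
split=> B oddB.
- change (mxzerop (ident2 (enum 'I_2) B)); rewrite enum_ordl.
  apply: (mxzerop_by_normal_form fD fM f1 (mx_entries_odd oddB) two_neq0 _ ident2_normal_form).
  exact: eval_ident2 (mx_entriesE B).
- change (mxzerop (ident3 (enum 'I_3) B)); rewrite enum_ordl.
  apply: (mxzerop_by_normal_form fD fM f1 (mx_entries_odd oddB) two_neq0 _ ident3_normal_form).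
  exact: eval_ident3 (mx_entriesE B).
Qed.
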